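(* For every 5-complex number $u$, $$e^u=e_+e^{v_+}+e^{v_1}\left(e_1\cos\tilde v_1+\tilde e_1\sin\tilde v_1\right)+e^{v_2}\left(e_2\cos\tilde v_2+\tilde e_2\sin\tilde v_2\right),$$ where $e^u=\sum_{n\ge0}u^n/n!$.
   Context: A 5-complex number is $u=x_0+h_1x_1+h_2x_2+h_3x_3+h_4x_4$ with real $x_j$, with componentwise addition and the commutative associative bilinear multiplication determined by $h_jh_k=h_{(j+k)\bmod 5}$, $h_0=1$. Canonical variables: $v_+=\sum_jx_j$ and, for $k=1,2$, $v_k=\sum_jx_j\cos(2\pi kj/5)$, $\tilde v_k=\sum_jx_j\sin(2\pi kj/5)$. Canonical basis (with $h_0=1$): $e_+=\frac15\sum_{j=0}^4h_j$, and for $k=1,2$: $e_k=\frac25\sum_{j=0}^4\cos(2\pi kj/5)h_j$, $\tilde e_k=\frac25\sum_{j=0}^4\sin(2\pi kj/5)h_j$. *)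

From mathcomp Require Import all_boot all_order all_algebra.
From mathcomp Require Import all_classical all_reals all_analysis.
Set Implicit Arguments. Unset Strict Implicit. Unset Printing Implicit Defensive.
Import Order.TTheory GRing.Theory Num.Theory.
Local Open Scope ring_scope.

Section Cx5.
Variable R : realType.

(* A 5-complex number u = x_0 + h_1 x_1 + ... + h_4 x_4 is represented by
   its coordinate function j |-> x_j (j : 'I_5). *)
Definition cx5 := 'I_5 -> R.

Definition cx5_h (j : 'I_5) : cx5 := fun i => if i == j then 1 else 0.

Definition cx5_one : cx5 := cx5_h ord0.

(* bilinear multiplication with h_j h_l = h_{(j+l) mod 5} *)
Definition cx5_mul (u w : cx5) : cx5 :=
  fun k => \sum_(j < 5) \sum_(l < 5)
             (if ((j + l) %% 5)%N == (k : nat) then u j * w l else 0).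

Definition cx5_pow (u : cx5) (n : nat) : cx5 := iter n (cx5_mul u) cx5_one.

Definition ang (k j : nat) : R := 2 * pi * k%:R * j%:R / 5.

Definition vplus (u : cx5) : R := \sum_(j < 5) u j.
Definition vk (k : nat) (u : cx5) : R := \sum_(j < 5) u j * cos (ang k j).
Definition tvk (k : nat) (u : cx5) : R := \sum_(j < 5) u j * sin (ang k j).

Definition eplus : cx5 := fun j => 1 / 5.
Definition ek (k : nat) : cx5 := fun j => 2 / 5 * cos (ang k j).
Definition tek (k : nat) : cx5 := fun j => 2 / 5 * sin (ang k j).

Definition cx5_exp_rhs (u : cx5) : cx5 := fun j =>
  eplus j * expR (vplus u)
  + expR (vk 1 u) * (ek 1 j * cos (tvk 1 u) + tek 1 j * sin (tvk 1 u))
  + expR (vk 2 u) * (ek 2 j * cos (tvk 2 u) + tek 2 j * sin (tvk 2 u)).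

End Cx5.

(* The characters chi_k(u) = sum_j x_j w^(kj), with w = exp(2 pi i/5), are
   multiplicative, since h_j |-> w^(kj) respects h_j h_l = h_((j+l) mod 5); their
   real and imaginary parts are the canonical variables.  As e_+, e_k, e~_k is the
   basis dual to the canonical variables (because the fifth roots of unity sum to
   0, i.e. cos(2pi/5) + cos(4pi/5) = -1/2), the j-th coordinate of u^n is a fixed
   linear combination of v_+^n and of the real and imaginary parts of chi_k(u)^n.
   So it suffices to sum the exponential series of a complex number a + ib: its
   partial sums E_N differ from E_N(a) E_N(ib) by a Cauchy-product defect that is
   dominated termwise by E_N(|a|) E_N(|b|) - E_N(|a| + |b|), which tends to 0
   because expR is multiplicative, while the real and imaginary parts of E_N(ib)
   are the partial sums of the cosine and sine series. *)

From mathcomp Require Import all_boot all_order all_algebra.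
From mathcomp Require Import all_classical all_reals all_analysis.
From mathcomp Require Import complex ring lra.
Set Implicit Arguments. Unset Strict Implicit. Unset Printing Implicit Defensive.
Import Order.TTheory GRing.Theory Num.Theory.
Import numFieldNormedType.Exports.
Local Open Scope ring_scope.
Local Open Scope classical_set_scope.
Local Open Scope complex_scope.

Section FifthRootsOfUnity.
Variable R : realType.
Implicit Types (x y : R) (k j n : nat).

Definition expi x : R[i] := cos x +i* sin x.

Lemma expiD x y : expi (x + y) = expi x * expi y.
Proof. by rewrite /expi cosD sinD; simpc; rewrite [sin x * _ + _]addrC. Qed.

Lemma expiMn x n : expi (x *+ n) = expi x ^+ n.
Proof.
elim: n => [|n IHn]; first by rewrite mulr0n /expi cos0 sin0.
by rewrite mulrS expiD IHn exprS.
Qed.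

Lemma ang_natmul k j : ang R k j = ang R 1 1 *+ (k * j).
Proof. by rewrite /ang -[RHS]mulr_natr natrM; ring. Qed.

Lemma ang_mul k j : ang R k j = ang R 1 (k * j).
Proof. by rewrite ang_natmul [RHS]ang_natmul mul1n. Qed.

Lemma ang_1_5 : ang R 1 5 = pi *+ 2.
Proof. by rewrite /ang -[RHS]mulr_natr; field. Qed.

Definition omega : R[i] := expi (ang R 1 1).

Lemma omegaX n : omega ^+ n = expi (ang R 1 n).
Proof. by rewrite /omega -expiMn [in RHS]ang_natmul mul1n. Qed.

Lemma omega5 : omega ^+ 5 = 1.
Proof. by rewrite omegaX ang_1_5 /expi cos2pi sin2pi. Qed.

Lemma omega_neq1 : omega != 1.
Proof.
apply/eqP => /(congr1 (@complex.Im R)) /= /eqP; rewrite gt_eqF //.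
rewrite /ang sin_gt0_pi //; have := pi_gt0 R; rewrite mulr1; lra.
Qed.

Lemma sum_omegaX : \sum_(i < 5) omega ^+ i = 0.
Proof.
apply/eqP; have /eqP := subrX1 omega 5.
by rewrite omega5 subrr eq_sym mulf_eq0 subr_eq0 (negbTE omega_neq1).
Qed.

Lemma cos_ang_mod n : cos (ang R 1 (n %% 5)) = cos (ang R 1 n).
Proof. by have := congr1 (@complex.Re R) (expr_mod n omega5); rewrite !omegaX. Qed.

Lemma cos_ang_sub5 n : (n <= 5)%N -> cos (ang R 1 (5 - n)) = cos (ang R 1 n).
Proof.
move=> le_n5; rewrite (_ : ang R 1 (5 - n) = pi *+ 2 - ang R 1 n).
  by rewrite cosB cos2pi sin2pi; ring.
by rewrite -ang_1_5 /ang natrB //; ring.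
Qed.

Lemma cos_ang_sum : 1 + 2 * cos (ang R 1 1) + 2 * cos (ang R 1 2) = 0.
Proof.
have := congr1 (@complex.Re R) sum_omegaX.
rewrite raddf_sum; under eq_bigr => i _ do rewrite omegaX.
have c3 := @cos_ang_sub5 2 isT; have c4 := @cos_ang_sub5 1 isT.
rewrite !big_ord_recr big_ord0 /= c3 c4 [ang R 1 0]/ang !mulr0 mul0r cos0; lra.
Qed.

(* j + 5 - m rather than j - m, to avoid truncated subtraction. *)
Lemma cos_angB k (j m : 'I_5) :
  cos (ang R k j - ang R k m) = cos (ang R 1 ((k * (j + 5 - m)) %% 5)).
Proof.
rewrite cos_ang_mod -ang_mul.
have -> : ang R k (j + 5 - m) = ang R k j - ang R k m + (pi *+ 2) *+ k.
  have le_m5 : (m <= j + 5)%N by rewrite ltnW // ltn_addl.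
  rewrite /ang natrB // natrD -[(pi *+ 2) *+ k]mulr_natr -[pi *+ 2]mulr_natr.
  by field.
by rewrite periodicn //; apply: cosD2pi.
Qed.

Lemma canonical_basis_dual (j m : 'I_5) :
  eplus R j + ek R 1 j * cos (ang R 1 m) + tek R 1 j * sin (ang R 1 m)
  + ek R 2 j * cos (ang R 2 m) + tek R 2 j * sin (ang R 2 m) = (j == m)%:R.
Proof.
transitivity (1 / 5 + 2 / 5 * cos (ang R 1 j - ang R 1 m)
                    + 2 / 5 * cos (ang R 2 j - ang R 2 m)).
  by rewrite !cosB /eplus /ek /tek; ring.
have c0 : cos (ang R 1 0) = 1 by rewrite /ang !mulr0 mul0r cos0.
have c3 := @cos_ang_sub5 2 isT; have c4 := @cos_ang_sub5 1 isT.
have := cos_ang_sum.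
by rewrite !cos_angB; case: j m => [[|[|[|[|[|?]]]]] ?] [[|[|[|[|[|?]]]]] ?] //=;
  rewrite ?c0 ?c3 ?c4; lra.
Qed.

End FifthRootsOfUnity.

Section Characters.
Variable R : realType.
Implicit Types (u w : cx5 R) (k n : nat).

Definition chi k u : R[i] := \sum_(j < 5) (u j)%:C * omega R ^+ (k * j).

Lemma sum_ord5_mod (V : nmodType) n (F : 'I_5 -> V) :
  \sum_(m < 5) (if (n %% 5)%N == m then F m else 0) = F (inZp n).
Proof.
by rewrite -big_mkcond (big_pred1 (inZp n)) // => m; rewrite eq_sym.
Qed.

Lemma chi_mul k u w : chi k (cx5_mul u w) = chi k u * chi k w.
Proof.
have omegaXk5 : (omega R ^+ k) ^+ 5 = 1 by rewrite exprAC omega5 expr1n.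
rewrite /chi /cx5_mul mulr_suml.
under eq_bigr => m _ do rewrite rmorph_sum mulr_suml.
rewrite exchange_big; apply: eq_bigr => j _; rewrite mulr_sumr.
under eq_bigr => m _ do rewrite rmorph_sum mulr_suml.
rewrite exchange_big; apply: eq_bigr => l _.
rewrite (eq_bigr (fun m : 'I_5 => if ((j + l) %% 5)%N == m
                    then (u j * w l)%:C * omega R ^+ (k * m) else 0)); last first.
  by move=> m _; case: ifP; rewrite ?rmorph0 ?mul0r.
rewrite sum_ord5_mod /= rmorphM exprM expr_mod // -exprM mulnDr exprD; ring.
Qed.

Lemma chi_one k : chi k (cx5_one R) = 1.
Proof.
rewrite /chi (bigD1 ord0) //= big1 => [|m /negbTE m_neq0].
  by rewrite /cx5_one /cx5_h eqxx muln0 expr0 mulr1 addr0.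
by rewrite /cx5_one /cx5_h m_neq0 mul0r.
Qed.

Lemma chi_pow k u n : chi k (cx5_pow u n) = chi k u ^+ n.
Proof.
elim: n => [|n IHn]; first by rewrite chi_one.
by rewrite /cx5_pow iterS chi_mul -/(cx5_pow u n) IHn exprS.
Qed.

Lemma chi0 u : chi 0 u = (vplus u)%:C.
Proof. by rewrite /chi rmorph_sum; apply: eq_bigr => j _; rewrite mulr1. Qed.

Lemma Re_chi k u : complex.Re (chi k u) = vk k u.
Proof.
rewrite raddf_sum; apply: eq_bigr => j _.
by rewrite omegaX -ang_mul /expi; simpc.
Qed.

Lemma Im_chi k u : complex.Im (chi k u) = tvk k u.
Proof.
rewrite raddf_sum; apply: eq_bigr => j _.
by rewrite omegaX -ang_mul /expi; simpc.
Qed.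

Lemma cx5_inversion u (j : 'I_5) :
  u j = eplus R j * vplus u + ek R 1 j * vk 1 u + tek R 1 j * tvk 1 u
        + ek R 2 j * vk 2 u + tek R 2 j * tvk 2 u.
Proof.
rewrite /vplus /vk /tvk !mulr_sumr -!big_split /=.
transitivity (\sum_(m < 5) u m * (j == m)%:R).
  rewrite (bigD1 j) //= eqxx mulr1 big1 ?addr0 // => m m_neq_j.
  by rewrite eq_sym (negbTE m_neq_j) mulr0.
by apply: eq_bigr => m _; rewrite -canonical_basis_dual; ring.
Qed.

Lemma cx5_powE u n (j : 'I_5) :
  cx5_pow u n j = eplus R j * vplus u ^+ n
   + ek R 1 j * complex.Re (chi 1 u ^+ n) + tek R 1 j * complex.Im (chi 1 u ^+ n)
   + ek R 2 j * complex.Re (chi 2 u ^+ n) + tek R 2 j * complex.Im (chi 2 u ^+ n).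
Proof.
have vplus_pow : vplus (cx5_pow u n) = vplus u ^+ n.
  by apply: complexI; rewrite -chi0 chi_pow chi0 rmorphXn.
by rewrite cx5_inversion -!Re_chi -!Im_chi !chi_pow vplus_pow.
Qed.

End Characters.

Section ExpPartialSums.
Variable F : numFieldType.
Implicit Types (x y : F) (N : nat).

Definition exp_psum N x : F := \sum_(0 <= n < N) x ^+ n / n`!%:R.

Definition exp_psum_defect N x y : F :=
  exp_psum N x * exp_psum N y - exp_psum N (x + y).

Lemma natr_fact_neq0 n : (n`!%:R : F) != 0.
Proof. by rewrite pnatr_eq0 -lt0n fact_gt0. Qed.

Lemma exprD_div_fact x y n : (x + y) ^+ n / n`!%:R =
  \sum_(0 <= i < n.+1) x ^+ i * y ^+ (n - i) / (i`!%:R * (n - i)`!%:R).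
Proof.
rewrite addrC exprDn big_mkord mulr_suml; apply: eq_bigr => i _.
have le_in : (i <= n)%N by rewrite -ltnS ltn_ord.
have binom_neq0 : ('C(n, i)%:R : F) != 0 by rewrite pnatr_eq0 -lt0n bin_gt0.
rewrite -(bin_fact le_in) !natrM -mulr_natr.
by field; rewrite !natr_fact_neq0 binom_neq0.
Qed.

Lemma exp_psumD N x y : exp_psum N (x + y) =
  \sum_(0 <= i < N) \sum_(0 <= j < N - i) x ^+ i * y ^+ j / (i`!%:R * j`!%:R).
Proof.
elim: N => [|N IHN]; first by rewrite /exp_psum !big_geq.
rewrite /exp_psum big_nat_recr //= -/(exp_psum N (x + y)) IHN exprD_div_fact.
rewrite [in RHS]big_nat_recr //= subSnn big_nat1.
rewrite [X in _ + X = _]big_nat_recr //= subnn addrA; congr (_ + _).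
rewrite -big_split; apply: eq_big_nat => i /andP [_ lt_iN] /=.
by rewrite subSn ?(ltnW lt_iN) // big_nat_recr.
Qed.

Lemma exp_psum_defectE N x y : exp_psum_defect N x y =
  \sum_(0 <= i < N) \sum_(N - i <= j < N) x ^+ i * y ^+ j / (i`!%:R * j`!%:R).
Proof.
rewrite /exp_psum_defect exp_psumD /exp_psum mulr_suml -sumrB.
apply: eq_big_nat => i /andP [_ lt_iN] /=.
rewrite mulr_sumr (@big_cat_nat _ _ _ (N - i) 0 N) ?leq_subr //=.
have termE j : x ^+ i / i`!%:R * (y ^+ j / j`!%:R) =
               x ^+ i * y ^+ j / (i`!%:R * j`!%:R) by rewrite invfM; ring.
under eq_bigr => j _ do rewrite termE.
under [X in _ + X - _]eq_bigr => j _ do rewrite termE.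
by rewrite addrC addKr.
Qed.

Lemma norm_exp_psum_defect N x y :
  `|exp_psum_defect N x y| <= exp_psum_defect N `|x| `|y|.
Proof.
rewrite !exp_psum_defectE; apply: (le_trans (ler_norm_sum _ _ _)).
apply: ler_sum => i _; apply: (le_trans (ler_norm_sum _ _ _)).
apply: ler_sum => j _.
by rewrite normrM normfV !normrM !normrX !normr_nat.
Qed.

End ExpPartialSums.

Section ComplexParts.
Variable R : rcfType.
Implicit Types (a b : R) (z : R[i]) (N n : nat).

Lemma imag_exprn b n : (0 +i* b) ^+ n =
  ((~~ odd n)%:R * (-1) ^+ n./2 * b ^+ n) +i* ((odd n)%:R * (-1) ^+ n.-1./2 * b ^+ n).
Proof.
pose P n := ((~~ odd n)%:R * (-1) ^+ n./2 * b ^+ n)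
             +i* ((odd n)%:R * (-1) ^+ n.-1./2 * b ^+ n).
suff : (0 +i* b) ^+ n = P n /\ (0 +i* b) ^+ n.+1 = P n.+1 by case.
elim: n => [|n [_ IHn]]; first by split; rewrite ?expr1 /P /=; simpc; rewrite ?expr1.
split=> //; rewrite exprS IHn /P; simpc.
case: n {IHn} => [|n] /=; first by congr Complex; rewrite /= ?expr0 ?expr1; ring.
by rewrite !negbK !exprS; congr Complex; ring.
Qed.

Lemma Re_divr_nat z n : complex.Re (z / n%:R) = complex.Re z / n%:R.
Proof. by case: z => x y; rewrite -(rmorph_nat (real_complex R)) -fmorphV; simpc. Qed.

Lemma Im_divr_nat z n : complex.Im (z / n%:R) = complex.Im z / n%:R.
Proof. by case: z => x y; rewrite -(rmorph_nat (real_complex R)) -fmorphV; simpc. Qed.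

Lemma Re_realM a z : complex.Re (a%:C * z) = a * complex.Re z.
Proof. by case: z => x y; simpc. Qed.

Lemma Im_realM a z : complex.Im (a%:C * z) = a * complex.Im z.
Proof. by case: z => x y; simpc. Qed.

Lemma normc_ge_Im z : `|complex.Im z|%:C <= `|z|.
Proof.
case: z => x y; simpc; rewrite /= -sqrtr_sqr ler_sqrt ?addr_ge0 ?sqr_ge0 //.
by rewrite lerDr sqr_ge0.
Qed.

Lemma exp_psum_real N a : exp_psum N a%:C = (exp_psum N a)%:C.
Proof.
rewrite /exp_psum rmorph_sum; apply: eq_bigr => n _.
by rewrite fmorph_div rmorphXn rmorph_nat.
Qed.

Lemma Re_exp_psum N z :
  complex.Re (exp_psum N z) = \sum_(0 <= n < N) complex.Re (z ^+ n) / n`!%:R.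
Proof. by rewrite raddf_sum; apply: eq_bigr => n _; rewrite -Re_divr_nat. Qed.

Lemma Im_exp_psum N z :
  complex.Im (exp_psum N z) = \sum_(0 <= n < N) complex.Im (z ^+ n) / n`!%:R.
Proof. by rewrite raddf_sum; apply: eq_bigr => n _; rewrite -Im_divr_nat. Qed.

End ComplexParts.

Lemma squeeze_norm_cvg0 (K : realFieldType) (T : Type) (F : set_system T)
    {FF : Filter F} (f g : T -> K) :
  (forall t, `|f t| <= g t) -> g @ F --> 0 -> f @ F --> 0.
Proof.
move=> le_fg g0; have Ng0 : (fun t => - g t) @ F --> 0 by rewrite -oppr0; apply: cvgN.
by apply: (squeeze_cvgr _ Ng0 g0); apply: filterE => t; rewrite -ler_norml.
Qed.

Section ComplexExponentialSeries.
Variable R : realType.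
Implicit Types (a b : R) (z : R[i]) (N : nat).

Lemma cvg_exp_psum a : (fun N => exp_psum N a) @ \oo --> expR a.
Proof. exact: is_cvg_series_exp_coeff. Qed.

Lemma exp_psum_defect_cvg0 a b : (fun N => exp_psum_defect N a b) @ \oo --> 0.
Proof.
rewrite -(subrr (expR (a + b))) {1}expRD.
by apply: cvgB; [apply: cvgM|]; apply: cvg_exp_psum.
Qed.

Lemma Re_exp_psum_imag N b :
  complex.Re (exp_psum N (0 +i* b)) = series (cos_coeff b) N.
Proof. by rewrite Re_exp_psum; apply: eq_bigr => n _; rewrite imag_exprn. Qed.

Lemma Im_exp_psum_imag N b :
  complex.Im (exp_psum N (0 +i* b)) = series (sin_coeff b) N.
Proof. by rewrite Im_exp_psum; apply: eq_bigr => n _; rewrite imag_exprn. Qed.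

Lemma norm_exp_psum_defect_complex N a b :
  `|exp_psum_defect N a%:C (0 +i* b)| <= (exp_psum_defect N `|a| `|b|)%:C.
Proof.
have normC_real x : `|x%:C| = `|x|%:C by rewrite normc_def /= expr0n addr0 sqrtr_sqr.
have normC_imag x : `|0 +i* x| = `|x|%:C by rewrite normc_def /= expr0n add0r sqrtr_sqr.
apply: le_trans (norm_exp_psum_defect _ _ _) _.
rewrite normC_real normC_imag /exp_psum_defect -(rmorphD (real_complex R)).
by rewrite !exp_psum_real -rmorphM -rmorphB.
Qed.

Lemma cvg_exp_psum_complex z :
  (fun N => complex.Re (exp_psum N z)) @ \oo --> expR (complex.Re z) * cos (complex.Im z)
  /\ (fun N => complex.Im (exp_psum N z)) @ \oo --> expR (complex.Re z) * sin (complex.Im z).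
Proof.
case: z => a b /=.
have exp_psum_split N : exp_psum N (a +i* b) =
    (exp_psum N a)%:C * exp_psum N (0 +i* b) - exp_psum_defect N a%:C (0 +i* b).
  rewrite /exp_psum_defect -exp_psum_real (_ : a%:C + _ = a +i* b); last by simpc.
  by rewrite opprB addrC subrK.
have defect_cvg0 (f : nat -> R) :
    (forall N, `|f N|%:C <= `|exp_psum_defect N a%:C (0 +i* b)|) -> f @ \oo --> 0.
  move=> le_f; apply: (squeeze_norm_cvg0 _ (exp_psum_defect_cvg0 `|a| `|b|)) => N.
  by have := le_trans (le_f N) (norm_exp_psum_defect_complex N a b); rewrite lecR.
split; rewrite -[X in _ --> X]subr0.
- under eq_fun => N do rewrite exp_psum_split raddfB -[X in X - _]/(complex.Re _)
    Re_realM Re_exp_psum_imag.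
  apply: cvgB; last by apply: defect_cvg0 => N; apply: normc_ge_Re.
  by apply: cvgM; [apply: cvg_exp_psum | rewrite unlock; apply: is_cvg_series_cos_coeff].
- under eq_fun => N do rewrite exp_psum_split raddfB -[X in X - _]/(complex.Im _)
    Im_realM Im_exp_psum_imag.
  apply: cvgB; last by apply: defect_cvg0 => N; apply: normc_ge_Im.
  by apply: cvgM; [apply: cvg_exp_psum | rewrite unlock; apply: is_cvg_series_sin_coeff].
Qed.

End ComplexExponentialSeries.

Lemma cx5_exp_psumE (R : realType) (u : cx5 R) (j : 'I_5) :
  series (fun n => cx5_pow u n j / n`!%:R) = fun N =>
    eplus R j * exp_psum N (vplus u)
  + ek R 1 j * complex.Re (exp_psum N (chi 1 u)) + tek R 1 j * complex.Im (exp_psum N (chi 1 u))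
  + ek R 2 j * complex.Re (exp_psum N (chi 2 u)) + tek R 2 j * complex.Im (exp_psum N (chi 2 u)).
Proof.
apply/funext => N; rewrite /series /= !Re_exp_psum !Im_exp_psum /exp_psum.
rewrite !mulr_sumr -!big_split /=.
by apply: eq_bigr => n _; rewrite cx5_powE; ring.
Qed.

Theorem mainTheorem8 (R : realType) (u : cx5 R) :
  forall j : 'I_5,
    (series (fun n : nat => cx5_pow u n j / (n`!)%:R) : R^nat) @ \oo --> (cx5_exp_rhs u j : R).
Proof.
move=> j.
have [Re1 Im1] := cvg_exp_psum_complex (chi 1 u).
have [Re2 Im2] := cvg_exp_psum_complex (chi 2 u).
rewrite !Re_chi !Im_chi in Re1 Im1 Re2 Im2.
rewrite cx5_exp_psumE.
have -> : cx5_exp_rhs u j = eplus R j * expR (vplus u)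
    + ek R 1 j * (expR (vk 1 u) * cos (tvk 1 u)) + tek R 1 j * (expR (vk 1 u) * sin (tvk 1 u))
    + ek R 2 j * (expR (vk 2 u) * cos (tvk 2 u)) + tek R 2 j * (expR (vk 2 u) * sin (tvk 2 u)).
  by rewrite /cx5_exp_rhs; ring.
by repeat apply: cvgD; apply: cvgM (cvg_cst _) _ => //; apply: cvg_exp_psum.
Qed.
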